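(* Let $M$ be a cartesian $\mathcal{I}$-monoid with multiplication $\mu$. The following are equivalent: (i) $M$ is $\mathcal{I}$-commutative; (ii) for all injections $\alpha\colon\mathbf{k}\sqcup\mathbf{l}\to\mathbf{n}$, the two maps $M(\mathbf{k})\times M(\mathbf{l})\to M(\mathbf{n})$ given by $(a,b)\mapsto \mu((\alpha|_{\mathbf{k}})_*a,(\alpha|_{\mathbf{l}})_*b)$ and $(a,b)\mapsto\mu((\alpha|_{\mathbf{l}})_*b,(\alpha|_{\mathbf{k}})_*a)$ agree; (iii) for all injections $\alpha\colon\mathbf{k}\sqcup\mathbf{l}\to\mathbf{n}$, the map $M(\mathbf{k})\times M(\mathbf{l})\to M(\mathbf{n})$, $(a,b)\mapsto\mu((\alpha|_{\mathbf{k}})_*a,(\alpha|_{\mathbf{l}})_*b)$, is a monoid homomorphism (for the product monoid structure on the source).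
   Context: $\mathcal{S}$ denotes simplicial sets or compactly generated weak Hausdorff spaces. $\mathcal{I}$ is the category of finite sets $\mathbf{n}=\{1,\dots,n\}$, $n\ge 0$, and injections, symmetric monoidal under concatenation $\mathbf{k}\sqcup\mathbf{l}=\mathbf{k+l}$ with block permutations as symmetry. An $\mathcal{I}$-space is a functor $\mathcal{I}\to\mathcal{S}$; $\boxtimes$ denotes the Day convolution product $(X\boxtimes Y)(\mathbf{n})=\operatorname{colim}_{\alpha\colon\mathbf{k}\sqcup\mathbf{l}\to\mathbf{n}}X(\mathbf{k})\times Y(\mathbf{l})$ with unit the constant $\mathcal{I}$-space $*$. A cartesian $\mathcal{I}$-monoid is a functor from $\mathcal{I}$ to monoids in $\mathcal{S}$ (equivalently a monoid for the levelwise cartesian product). The natural map $\rho_{X,Y}\colon X\boxtimes Y\to X\times Y$ sends the class of $(\alpha\colon\mathbf{k}\sqcup\mathbf{l}\to\mathbf{n},x,y)$ to $((\alpha|_{\mathbf{k}})_*x,(\alpha|_{\mathbf{l}})_*y)$. The underlying $\mathcal{I}$-space monoid of a cartesian $\mathcal{I}$-monoid $M$ is $M$ with multiplication $\mu\circ\rho_{M,M}\colon M\boxtimes M\to M$; $M$ is called $\mathcal{I}$-commutative if this $\boxtimes$-monoid is commutative (with respect to the symmetry of $\boxtimes$ induced by twisting factors and block permutations). *)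

From mathcomp Require Import all_boot.
From Stdlib Require Import Relations.
Set Implicit Arguments. Unset Strict Implicit. Unset Printing Implicit Defensive.

Record Inj (k n : nat) := MkInj {
  inj_fun :> 'I_k -> 'I_n;
  inj_injective : injective inj_fun }.

Definition inj_id (n : nat) : Inj n n := @MkInj n n id (fun _ _ h => h).

Lemma inj_comp_proof k m n (g : Inj m n) (f : Inj k m) : injective (g \o f).
Proof. by move=> x y /= /inj_injective /inj_injective. Qed.
Definition inj_comp k m n (g : Inj m n) (f : Inj k m) : Inj k n :=
  MkInj (@inj_comp_proof k m n g f).

Definition inj_inl (k l : nat) : Inj k (k + l) := MkInj (@lshift_inj k l).
Definition inj_inr (k l : nat) : Inj l (k + l) := MkInj (@rshift_inj k l).

Definition restr_l k l n (a : Inj (k + l) n) : Inj k n := inj_comp a (inj_inl k l).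
Definition restr_r k l n (a : Inj (k + l) n) : Inj l n := inj_comp a (inj_inr k l).

Definition sum_fun k l k' l' (b : Inj k k') (g : Inj l l') (i : 'I_(k + l))
  : 'I_(k' + l') :=
  match split i with inl a => lshift l' (b a) | inr c => rshift k' (g c) end.

Lemma sum_fun_inj k l k' l' (b : Inj k k') (g : Inj l l') :
  injective (sum_fun b g).
Proof.
move=> i j; rewrite /sum_fun -{2}(splitK i) -{2}(splitK j).
case: (split i) => [a|a]; case: (split j) => [c|c] /= /eqP;
  rewrite ?eq_lshift ?eq_rshift ?eq_lrshift ?eq_rlshift //.
- by move/eqP/inj_injective => ->.
- by move/eqP/inj_injective => ->.
Qed.
Definition inj_sum k l k' l' (b : Inj k k') (g : Inj l l') : Inj (k + l) (k' + l') :=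
  MkInj (@sum_fun_inj k l k' l' b g).

Definition block_fun (l k : nat) (i : 'I_(l + k)) : 'I_(k + l) :=
  match split i with inl a => rshift k a | inr c => lshift l c end.
Lemma block_fun_inj l k : injective (@block_fun l k).
Proof.
move=> i j; rewrite /block_fun -{2}(splitK i) -{2}(splitK j).
case: (split i) => [a|a]; case: (split j) => [c|c] /= /eqP;
  rewrite ?eq_lshift ?eq_rshift ?eq_lrshift ?eq_rlshift //;
  by move/eqP => ->.
Qed.
Definition block_perm l k : Inj (l + k) (k + l) := MkInj (@block_fun_inj l k).

Record ISpace := {
  isp :> nat -> Type;
  iact : forall k n, Inj k n -> isp k -> isp n;
  iact_id : forall n (x : isp n), iact (inj_id n) x = x;
  iact_comp : forall k m n (g : Inj m n) (f : Inj k m) (x : isp k),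
      iact (inj_comp g f) x = iact g (iact f x) }.

Record cartIMonoid := {
  cM :> ISpace;
  cmul : forall n, cM n -> cM n -> cM n;
  cone : forall n, cM n;
  cmulA : forall n (x y z : cM n), cmul x (cmul y z) = cmul (cmul x y) z;
  cmul1x : forall n (x : cM n), cmul (cone n) x = x;
  cmulx1 : forall n (x : cM n), cmul x (cone n) = x;
  cact_mul : forall k n (f : Inj k n) (x y : cM k),
      iact f (cmul x y) = cmul (iact f x) (iact f y);
  cact_one : forall k n (f : Inj k n), iact f (cone k) = cone n }.

(* (X ⊠ Y)(n) is the colimit over alpha : k ⊔ l -> n of X(k) x Y(l), i.e. the
   quotient of the type [DayRep X Y n] of representatives (alpha, x, y) by the
   equivalence relation [day_equiv] generated by
   (alpha o (beta ⊔ gamma), x, y) ~ (alpha, beta_* x, gamma_* y). *)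
Record DayRep (X Y : ISpace) (n : nat) := MkDay {
  dk : nat; dl : nat; dalpha : Inj (dk + dl) n; dx : X dk; dy : Y dl }.

Inductive day_step (X Y : ISpace) (n : nat) : DayRep X Y n -> DayRep X Y n -> Prop :=
| DayStep k l k' l' (a : Inj (k' + l') n) (b : Inj k k') (g : Inj l l')
    (x : X k) (y : Y l) :
    day_step (MkDay (inj_comp a (inj_sum b g)) x y) (MkDay a (iact b x) (iact g y)).

Definition day_equiv (X Y : ISpace) (n : nat) : relation (DayRep X Y n) :=
  clos_refl_sym_trans _ (@day_step X Y n).

Definition rho_rep (X Y : ISpace) n (r : DayRep X Y n) : X n * Y n :=
  (iact (restr_l (dalpha r)) (dx r), iact (restr_r (dalpha r)) (dy r)).

Definition tau_rep (X Y : ISpace) n (r : DayRep X Y n) : DayRep Y X n :=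
  MkDay (inj_comp (dalpha r) (block_perm (dl r) (dk r))) (dy r) (dx r).

Definition boxmul_rep (M : cartIMonoid) n (r : DayRep M M n) : M n :=
  let p := rho_rep r in cmul p.1 p.2.

(* M is I-commutative: mu_⊠ o tau = mu_⊠ as maps (M ⊠ M)(n) -> M(n); since
   every element of the colimit is the class of a representative and both maps
   are induced from representatives, this is equality on all representatives. *)
Definition I_commutative (M : cartIMonoid) : Prop :=
  forall n (r : DayRep M M n), boxmul_rep (tau_rep r) = boxmul_rep r.

(** The symmetry of [M ⊠ M] twists the factors and precomposes [alpha] with a
    block permutation, which exchanges the restrictions [alpha|_k] and
    [alpha|_l]; read through [rho], it therefore just swaps the two factors of
    [mu((alpha|_k)_* a, (alpha|_l)_* b)], giving (i) <-> (ii).  For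
    (ii) <-> (iii): a product [(a, b) |-> f a * g b] of two monoid maps is
    multiplicative as soon as the images of [f] and [g] commute, and
    conversely multiplicativity applied to [(1, b) * (a, 1)] makes them
    commute. *)
From Pilot Require Import Defs.
From mathcomp Require Import all_boot.
From Stdlib Require Import FunctionalExtensionality ProofIrrelevance.

Set Implicit Arguments.
Unset Strict Implicit.
Unset Printing Implicit Defensive.

Lemma inj_ext k n (f g : Inj k n) : f =1 g -> f = g.
Proof.
case: f g => f f_inj [g g_inj] /= /functional_extensionality eq_fg.
by subst g; rewrite (proof_irrelevance _ f_inj g_inj).
Qed.

(* Qualified because [all_boot] shadows [inj_comp] with the ssrfun lemma. *)
Lemma restr_l_block k l n (alpha : Inj (k + l) n) :
  restr_l (Defs.inj_comp alpha (block_perm l k)) = restr_r alpha.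
Proof.
by apply: inj_ext => i /=; rewrite /block_fun (unsplitK (inl i : 'I_l + 'I_k)).
Qed.

Lemma restr_r_block k l n (alpha : Inj (k + l) n) :
  restr_r (Defs.inj_comp alpha (block_perm l k)) = restr_l alpha.
Proof.
by apply: inj_ext => i /=; rewrite /block_fun (unsplitK (inr i : 'I_l + 'I_k)).
Qed.

Lemma interchange_of_commute T (mul : T -> T -> T) : associative mul ->
  forall x x' y y', mul x' y = mul y x' ->
  mul (mul x x') (mul y y') = mul (mul x y) (mul x' y').
Proof. by move=> mulA x x' y y' comm_x'y; rewrite -!mulA (mulA x') comm_x'y -mulA. Qed.

Section DayMultiplication.

Variable M : cartIMonoid.

Definition day_mul k l n (alpha : Inj (k + l) n) (a : M k) (b : M l) : M n :=
  cmul (iact (restr_l alpha) a) (iact (restr_r alpha) b).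

Definition restrictions_commute : Prop :=
  forall k l n (alpha : Inj (k + l) n) (a : M k) (b : M l),
    day_mul alpha a b = cmul (iact (restr_r alpha) b) (iact (restr_l alpha) a).

Definition day_mul_monoid_morphism : Prop :=
  forall k l n (alpha : Inj (k + l) n),
    day_mul alpha (cone M k) (cone M l) = cone M n /\
    (forall (a a' : M k) (b b' : M l),
       day_mul alpha (cmul a a') (cmul b b')
       = cmul (day_mul alpha a b) (day_mul alpha a' b')).

Lemma boxmul_repE n (r : DayRep M M n) :
  boxmul_rep r = day_mul (dalpha r) (dx r) (dy r).
Proof. by []. Qed.

Lemma boxmul_rep_tau n (r : DayRep M M n) :
  boxmul_rep (tau_rep r)
  = cmul (iact (restr_r (dalpha r)) (dy r)) (iact (restr_l (dalpha r)) (dx r)).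
Proof. by rewrite /boxmul_rep /rho_rep /= restr_l_block restr_r_block. Qed.

Lemma I_commutativeP : I_commutative M <-> restrictions_commute.
Proof.
split=> [commM k l n alpha a b | comm_restr n r].
- by have := commM n (MkDay alpha a b); rewrite boxmul_rep_tau => ->.
- by rewrite boxmul_rep_tau boxmul_repE comm_restr.
Qed.

Lemma day_mul1l k l n (alpha : Inj (k + l) n) (b : M l) :
  day_mul alpha (cone M k) b = iact (restr_r alpha) b.
Proof. by rewrite /day_mul cact_one cmul1x. Qed.

Lemma day_mul1r k l n (alpha : Inj (k + l) n) (a : M k) :
  day_mul alpha a (cone M l) = iact (restr_l alpha) a.
Proof. by rewrite /day_mul cact_one cmulx1. Qed.

Lemma restrictions_commute_morphismP :
  restrictions_commute <-> day_mul_monoid_morphism.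
Proof.
split=> [comm_restr k l n alpha | morph k l n alpha a b].
- split=> [|a a' b b']; first by rewrite day_mul1l cact_one.
  rewrite /day_mul !cact_mul; apply: interchange_of_commute; first exact: cmulA.
  by rewrite -comm_restr.
- have [_ morph_mul] := morph k l n alpha.
  have := morph_mul (cone M k) a b (cone M l).
  by rewrite cmul1x cmulx1 day_mul1l day_mul1r.
Qed.

End DayMultiplication.

Theorem lemma2p7 (M : cartIMonoid) :
  let phi := fun k l n (alpha : Inj (k + l) n) (a : M k) (b : M l) =>
    cmul (iact (restr_l alpha) a) (iact (restr_r alpha) b) in
  let phi' := fun k l n (alpha : Inj (k + l) n) (a : M k) (b : M l) =>
    cmul (iact (restr_r alpha) b) (iact (restr_l alpha) a) in
  (I_commutative M <->
     (forall k l n (alpha : Inj (k + l) n) (a : M k) (b : M l),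
        phi k l n alpha a b = phi' k l n alpha a b))
  /\
  (I_commutative M <->
     (forall k l n (alpha : Inj (k + l) n),
        phi k l n alpha (cone M k) (cone M l) = cone M n /\
        (forall (a a' : M k) (b b' : M l),
           phi k l n alpha (cmul a a') (cmul b b')
           = cmul (phi k l n alpha a b) (phi k l n alpha a' b')))).
Proof.
move=> phi phi'; split; first exact: I_commutativeP.
exact: iff_trans (I_commutativeP M) (restrictions_commute_morphismP M).
Qed.
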